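(* Let $\mathcal{D}$ be a $\{K_3,K_4\}$-decomposition of $K_{18}$ with $\alpha=13$, let $W$ be the set of vertices $x$ with $\alpha_x\ge 2$, and for $i\in\{0,1,2,3\}$ let $t_i$ be the number of copies of $K_3$ in $\mathcal{D}$ having exactly $i$ vertices in $W$. Then $(t_0,t_1,t_2,t_3)\neq(0,1,9,3)$.
   Context: A $\{K_3,K_4\}$-decomposition of $K_v$ is a collection of subgraphs, each isomorphic to $K_3$ or $K_4$, such that every edge of $K_v$ lies in exactly one of them. $\alpha$ is the number of copies of $K_3$ in the decomposition, and for a vertex $x$, $\alpha_x$ is the number of copies of $K_3$ in the decomposition containing $x$. *)

From mathcomp Require Import all_boot.
Set Implicit Arguments. Unset Strict Implicit. Unset Printing Implicit Defensive.

(* A copy of K_3 or K_4 inside K_v is determined by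
   its vertex set (of size 3 or 4); its edges are all pairs of its vertices. *)
Definition K34_decomposition (v : nat) (D : {set {set 'I_v}}) : Prop :=
  (forall B, B \in D -> #|B| = 3 \/ #|B| = 4) /\
  (forall x y : 'I_v, x != y ->
     #|[set B in D | (x \in B) && (y \in B)]| = 1).

Definition alpha (v : nat) (D : {set {set 'I_v}}) : nat :=
  #|[set B in D | #|B| == 3]|.

Definition alpha_x (v : nat) (D : {set {set 'I_v}}) (x : 'I_v) : nat :=
  #|[set B in D | (#|B| == 3) && (x \in B)]|.

Definition Wset (v : nat) (D : {set {set 'I_v}}) : {set 'I_v} :=
  [set x | 2 <= alpha_x D x].

Definition t_count (v : nat) (D : {set {set 'I_v}}) (i : nat) : nat :=
  #|[set B in D | (#|B| == 3) && (#|B :&: Wset D| == i)]|.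

From mathcomp Require Import all_boot zify.
Set Implicit Arguments. Unset Strict Implicit. Unset Printing Implicit Defensive.

(* Every vertex x satisfies
   2 alpha_x + 3 beta_x = 17, where beta_x counts the copies of K_4 through x,
   so alpha_x is 1, 4 or 7.  With the given profile, summing |T :&: W| and
   |T :\: W| over the triangles T gives 28 and 11, which forces |W| = 7,
   alpha_x = 4 (beta_x = 3) on W and beta_x = 5 off W.  Let q_k be the number
   of copies of K_4 meeting W in k points: counting vertices, incidences with
   W and ordered pairs of W over the K_4's gives sum q_k = 19,
   sum k q_k = 21 and sum k (k - 1) q_k = 42 - 36 = 6, so q is
   (0, 18, 0, 1, 0) or (1, 15, 3, 0, 0).
   In the first case take y outside W on the triangle with one W-vertex: the
   five K_4's through y each meet W in an odd number of points, yet together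
   they meet W in 7 - 1 = 6 points.
   In the second case every vertex y of the K_4 missing W lies on a K_4
   meeting W in two points (its triangle meets W in at most two points), but
   each of the three such K_4's shares at most one vertex with it. *)

Definition profile (T : finType) (D : {set {set T}}) (p : pred {set T}) (S : {set T})
    (k : nat) : nat :=
  #|[set B in D | p B && (#|B :&: S| == k)]|.

Section Incidence.

Variable T : finType.
Implicit Types (D : {set {set T}}) (p : pred {set T}) (B S : {set T}).

Lemma sum_nat_const_cond D p c :
  \sum_(B in D | p B) c = #|[set B in D | p B]| * c.
Proof. by rewrite -sum_nat_const; apply: eq_bigl => B; rewrite inE. Qed.

Lemma sum_set1_cond D p (F : {set T} -> nat) B0 :
  [set B in D | p B] = [set B0] -> \sum_(B in D | p B) F B = F B0.
Proof.
by move=> DB0; rewrite -(big_set1 addn B0 F); apply: eq_bigl => B; rewrite -DB0 inE.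
Qed.

Lemma sum_incidence D p S (h : {set T} -> nat) :
  \sum_(x in S) \sum_(B in D | p B && (x \in B)) h B =
  \sum_(B in D | p B) h B * #|B :&: S|.
Proof.
rewrite (exchange_big_dep (fun B => (B \in D) && p B)) => [|x B _ /andP[-> /andP[-> _]] //].
apply: eq_bigr => B /andP[BD pB]; rewrite mulnC -sum_nat_const.
by apply: eq_bigl => x; rewrite !inE BD pB andbC.
Qed.

Lemma card_incidence D p S :
  \sum_(x in S) #|[set B in D | p B && (x \in B)]| = \sum_(B in D | p B) #|B :&: S|.
Proof.
transitivity (\sum_(B in D | p B) 1 * #|B :&: S|); last first.
  by apply: eq_bigr => B _; rewrite mul1n.
by rewrite -sum_incidence; apply: eq_bigr => x _; rewrite sum_nat_const_cond muln1.
Qed.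

Lemma sum_card_meet_profile D p S n (g : nat -> nat) :
    (forall B, B \in D -> p B -> #|B| <= n) ->
  \sum_(B in D | p B) g #|B :&: S| = \sum_(k < n.+1) g k * profile D p S k.
Proof.
move=> le_n.
under [RHS]eq_bigr do rewrite /profile -[#|_|]muln1 -sum_nat_const_cond big_distrr /=.
rewrite (exchange_big_dep (fun B => (B \in D) && p B)) /= => [|k B _ /andP[-> /andP[-> _]] //].
apply: eq_bigr => B /andP[BD pB].
have lt_n : #|B :&: S| < n.+1.
  by rewrite ltnS (leq_trans (subset_leq_card (subsetIl B S))) ?le_n.
rewrite BD pB (bigD1 (Ordinal lt_n)) //= muln1 big1 ?addn0 // => k.
by case/andP=> /eqP eq_k /eqP[]; apply: val_inj.
Qed.

Lemma profile_le D p1 p2 S k :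
  (forall B, p1 B -> p2 B) -> profile D p1 S k <= profile D p2 S k.
Proof.
move=> p12; apply/subset_leq_card/subsetP => B; rewrite !inE.
by case/andP=> -> /andP[/p12 -> ->].
Qed.

Lemma card_meet_lt B S y : y \in B -> y \notin S -> #|B :&: S| < #|B|.
Proof.
move=> yB yS; apply: proper_card; rewrite properEneq subsetIl andbT.
by apply/eqP => BS; rewrite -BS inE (negbTE yS) andbF in yB.
Qed.

Lemma sum_split_card34 D (q : pred {set T}) (F : {set T} -> nat) :
    (forall B, B \in D -> #|B| = 3 \/ #|B| = 4) ->
  \sum_(B in D | q B) F B =
  \sum_(B in D | q B && (#|B| == 3)) F B + \sum_(B in D | q B && (#|B| == 4)) F B.
Proof.
move=> size34; rewrite (bigID (fun B : {set T} => #|B| == 3)) /=.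
congr (_ + _); apply: eq_bigl => B; case BD: (B \in D) => //=.
by case: (size34 B BD) => ->; rewrite ?andbF ?andbT.
Qed.

Section UniquePairs.

Variable D : {set {set T}}.
Hypothesis pair_unique :
  forall x y : T, x != y -> #|[set B in D | (x \in B) && (y \in B)]| = 1.

Lemma sum_card_meet_notin x S :
  x \notin S -> \sum_(B in D | x \in B) #|B :&: S| = #|S|.
Proof.
move=> xS; rewrite -(card_incidence D (fun B => x \in B)) -sum1_card.
by apply: eq_bigr => y yS; apply: pair_unique; apply: contraNneq xS => ->.
Qed.

Lemma sum_card_through x : \sum_(B in D | x \in B) #|B|.-1 = #|T|.-1.
Proof.
rewrite -(cardsC1 x) -(@sum_card_meet_notin x) ?setC11 //.
by apply: eq_bigr => B /andP[_ xB]; rewrite (cardsD1 x B) xB -setDE.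
Qed.

Lemma sum_card_meet_in x S :
  x \in S -> \sum_(B in D | x \in B) #|B :&: S|.-1 = #|S|.-1.
Proof.
move=> xS; rewrite [in RHS](cardsD1 x S) xS -(@sum_card_meet_notin x) ?setD11 //.
by apply: eq_bigr => B /andP[_ xB]; rewrite setIDA (cardsD1 x (B :&: S)) inE xB xS.
Qed.

Lemma sum_card_meet_pairs S :
  \sum_(B in D) #|B :&: S| * #|B :&: S|.-1 = #|S| * #|S|.-1.
Proof.
rewrite -sum_nat_const.
transitivity (\sum_(B in D | predT B) #|B :&: S|.-1 * #|B :&: S|).
  by apply: eq_big => [B | B _]; rewrite ?andbT // mulnC.
rewrite -sum_incidence; apply: eq_bigr => x xS.
exact: sum_card_meet_in.
Qed.

Lemma card_meet_le1 B N : B \in D -> N \in D -> B != N -> #|B :&: N| <= 1.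
Proof.
move=> BD ND neBN; rewrite leqNgt; apply/negP => /card_gt1P[y [z []]].
rewrite !inE => /andP[yB yN] /andP[zB zN] neyz.
have: #|[set B; N]| <= #|[set C in D | (y \in C) && (z \in C)]|.
  apply/subset_leq_card/subsetP => C; rewrite !inE.
  by case/orP=> /eqP ->; rewrite ?BD ?ND ?yB ?zB ?yN ?zN.
by rewrite cards2 neBN pair_unique.
Qed.

End UniquePairs.
End Incidence.

Definition beta_x (v : nat) (D : {set {set 'I_v}}) (x : 'I_v) : nat :=
  #|[set B in D | (#|B| == 4) && (x \in B)]|.

Section Decomposition.

Variables (v : nat) (D : {set {set 'I_v}}).

Lemma sum_alpha_x (S : {set 'I_v}) :
  \sum_(x in S) alpha_x D x = \sum_(B in D | #|B| == 3) #|B :&: S|.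
Proof. exact: card_incidence. Qed.

Lemma sum_beta_x (S : {set 'I_v}) :
  \sum_(x in S) beta_x D x = \sum_(B in D | #|B| == 4) #|B :&: S|.
Proof. exact: card_incidence. Qed.

Lemma K34_degree x : K34_decomposition D -> 2 * alpha_x D x + 3 * beta_x D x = v.-1.
Proof.
case=> size34 pair_unique.
rewrite -[v in RHS]card_ord -(sum_card_through pair_unique x) (sum_split_card34 _ _ size34).
rewrite (eq_bigr (fun=> 2)) => [|B /and3P[_ _ /eqP -> //]].
rewrite [X in _ = _ + X](eq_bigr (fun=> 3)) => [|B /and3P[_ _ /eqP -> //]].
rewrite !sum_nat_const_cond mulnC [3 * _]mulnC /alpha_x /beta_x.
by congr (_ * _ + _ * _); apply: eq_card => B; rewrite !inE [_ && (x \in B)]andbC.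
Qed.

End Decomposition.

Section TriangleProfile.

Variable D : {set {set 'I_18}}.
Hypothesis decD : K34_decomposition D.
Hypotheses (t0 : t_count D 0 = 0) (t1 : t_count D 1 = 1)
           (t2 : t_count D 2 = 9) (t3 : t_count D 3 = 3).

Let size34 := proj1 decD.
Let pair_unique := proj2 decD.
Local Notation W := (Wset D).
Local Notation q := (profile D (fun B => #|B| == 4) W).
Local Notation r y := (profile D (fun B => (#|B| == 4) && (y \in B)) W).

Lemma alpha_notin_W x : x \notin W -> alpha_x D x = 1.
Proof. by rewrite inE -ltnNge; have := K34_degree x decD; lia. Qed.

Lemma alpha_in_W x : x \in W -> 4 <= alpha_x D x.
Proof. by rewrite inE; have := K34_degree x decD; lia. Qed.

Lemma sum_triangles_meet_W (g : nat -> nat) :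
  \sum_(B in D | #|B| == 3) g #|B :&: W| = g 1 + 9 * g 2 + 3 * g 3.
Proof.
rewrite (@sum_card_meet_profile _ _ _ _ 3) => [|B _ /eqP -> //].
rewrite !big_ord_recr !big_ord0 /=.
change (profile D (fun B => #|B| == 3) W) with (t_count D).
by rewrite t0 t1 t2 t3; lia.
Qed.

Lemma card_notW : #|~: W| = 11.
Proof.
transitivity (\sum_(x in ~: W) alpha_x D x).
  by rewrite -sum1_card; apply: eq_bigr => x; rewrite inE => /alpha_notin_W.
rewrite sum_alpha_x (eq_bigr (fun B => 3 - #|B :&: W|)) ?sum_triangles_meet_W //.
by move=> B /andP[_ /eqP B3]; rewrite -setDE; have := cardsID W B; rewrite B3; lia.
Qed.

Lemma card_W : #|W| = 7.
Proof. by have := cardsC W; rewrite card_notW card_ord; lia. Qed.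

Lemma alpha_W x : x \in W -> alpha_x D x = 4.
Proof.
move=> xW; have := alpha_in_W xW.
have : \sum_(y in W) (alpha_x D y - 4) == 0.
  rewrite -(eqn_add2r (\sum_(y in W) 4)) -big_split /= sum_nat_const card_W.
  rewrite (eq_bigr (alpha_x D)) => [|y /alpha_in_W]; last lia.
  by rewrite sum_alpha_x (sum_triangles_meet_W (fun k => k)).
by rewrite sum_nat_eq0 => /forall_inP/(_ x xW); lia.
Qed.

Lemma beta_W x : x \in W -> beta_x D x = 3.
Proof. by move/alpha_W; have := K34_degree x decD; lia. Qed.

Lemma beta_notin_W x : x \notin W -> beta_x D x = 5.
Proof. by move/alpha_notin_W; have := K34_degree x decD; lia. Qed.

Lemma sum_K4_meet_W (g : nat -> nat) :
  \sum_(B in D | #|B| == 4) g #|B :&: W| = \sum_(k < 5) g k * q k.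
Proof. by apply: sum_card_meet_profile => B _ /eqP ->. Qed.

Lemma K4_profile :
  q 0 = 0 /\ q 1 = 18 /\ q 2 = 0 /\ q 3 = 1 /\ q 4 = 0 \/
  q 0 = 1 /\ q 1 = 15 /\ q 2 = 3 /\ q 3 = 0 /\ q 4 = 0.
Proof.
have points : \sum_(B in D | #|B| == 4) 4 = 76.
  transitivity (\sum_(B in D | #|B| == 4) #|B :&: [set: 'I_18]|).
    by apply: eq_bigr => B /andP[_ /eqP B4]; rewrite setIT B4.
  rewrite -sum_beta_x (big_setID W) setTI setTD /=.
  rewrite (eq_bigr (fun=> 3)) => [|x /beta_W //].
  rewrite [X in _ + X](eq_bigr (fun=> 5)) => [|x]; last by rewrite inE => /beta_notin_W.
  by rewrite !sum_nat_const card_W card_notW.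
have incidences : \sum_(B in D | #|B| == 4) #|B :&: W| = 21.
  rewrite -sum_beta_x (eq_bigr (fun=> 3)) => [|x /beta_W //].
  by rewrite sum_nat_const card_W.
have pairs : \sum_(B in D | #|B| == 4) #|B :&: W| * #|B :&: W|.-1 = 6.
  have := sum_card_meet_pairs pair_unique W.
  rewrite -(eq_bigl _ _ (fun B => andbT (B \in D))).
  rewrite (sum_split_card34 predT _ size34).
  rewrite card_W (sum_triangles_meet_W (fun k => k * k.-1)) /= => all_pairs.
  by apply/eqP; rewrite -(eqn_add2l 36); apply/eqP; exact: all_pairs.
move: (sum_K4_meet_W (fun=> 4)) (sum_K4_meet_W (fun k => k)).
move: (sum_K4_meet_W (fun k => k * k.-1)).
rewrite /= points incidences pairs !big_ord_recr !big_ord0 /=; lia.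
Qed.

Lemma triangle_through_notW y : y \notin W ->
  exists T0, [set B in D | (#|B| == 3) && (y \in B)] = [set T0].
Proof. by move/alpha_notin_W/eqP/cards1P. Qed.

Lemma K4_through_notW y : y \notin W ->
  \sum_(k < 5) r y k = 5 /\
  \sum_(k < 5) k * r y k + \sum_(B in D | (#|B| == 3) && (y \in B)) #|B :&: W| = 7.
Proof.
move=> yW.
have fibres g : \sum_(B in D | (#|B| == 4) && (y \in B)) g #|B :&: W| =
                \sum_(k < 5) g k * r y k.
  by apply: sum_card_meet_profile => B _ /andP[/eqP -> _].
split.
  rewrite -[RHS](beta_notin_W yW) -[beta_x D y]muln1 -sum_nat_const_cond.
  by rewrite (fibres (fun=> 1)); apply: eq_bigr => k _; rewrite mul1n.
have /= <- := fibres (fun k => k).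
rewrite addnC -[RHS]card_W -(sum_card_meet_notin pair_unique yW).
rewrite [RHS](sum_split_card34 _ _ size34).
by congr (_ + _); apply: eq_bigl => B; rewrite [(y \in B) && _]andbC.
Qed.

Lemma profile_through_le y k : r y k <= q k.
Proof. by apply: profile_le => B /andP[]. Qed.

Lemma profile_A_impossible : q 0 = 0 -> q 2 = 0 -> q 4 = 0 -> False.
Proof.
move=> q0 q2 q4.
have /cards1P[T0 T0E] : t_count D 1 == 1 by apply/eqP.
have : T0 \in [set T0] := set11 T0.
rewrite -T0E !inE => /and3P[T0D /eqP T03 /eqP T0W].
have /subsetPn[y yT0 yW] : ~~ (T0 \subset W).
  by apply/negP => /setIidPl T0sub; move: T0W; rewrite T0sub T03.
have Ty : [set B in D | (#|B| == 3) && (y \in B)] = [set T0].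
  have [T1 T1E] := triangle_through_notW yW.
  have : T0 \in [set B in D | (#|B| == 3) && (y \in B)] by rewrite !inE T0D T03 eqxx.
  by rewrite T1E inE => /eqP ->.
(* The bounds go into the goal so that [/=] simplifies all profile terms alike. *)
move: (profile_through_le y 0) (profile_through_le y 2) (profile_through_le y 4).
rewrite q0 q2 q4; have [] := K4_through_notW yW; rewrite (sum_set1_cond _ Ty) T0W.
rewrite !big_ord_recr !big_ord0 /=; lia.
Qed.

Lemma profile_B_impossible : q 0 = 1 -> q 2 = 3 -> q 3 = 0 -> q 4 = 0 -> False.
Proof.
move=> q0 q2 q3 q4.
have /cards1P[N NE] : q 0 == 1 by apply/eqP.
have : N \in [set N] := set11 N.
rewrite -NE !inE => /and3P[ND /eqP N4 /eqP NW].
have notW y : y \in N -> y \notin W.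
  move=> yN; apply/negP => yW.
  suff : 0 < #|N :&: W| by rewrite NW.
  by apply/card_gt0P; exists y; rewrite inE yN yW.
have r2 y : y \in N -> 0 < r y 2.
  move=> yN; have yW := notW y yN.
  have [T1 T1E] := triangle_through_notW yW.
  have : T1 \in [set T1] := set11 T1.
  rewrite -T1E !inE => /and3P[_ /eqP T13 yT1].
  have r0 : 0 < r y 0 by apply/card_gt0P; exists N; rewrite !inE ND N4 yN NW.
  move: r0 (profile_through_le y 3) (profile_through_le y 4) (card_meet_lt yT1 yW).
  rewrite q3 q4 T13; have [] := K4_through_notW yW; rewrite (sum_set1_cond _ T1E).
  rewrite !big_ord_recr !big_ord0 /=; lia.
have : #|N| <=
    \sum_(y in N) #|[set B in D | ((#|B| == 4) && (#|B :&: W| == 2)) && (y \in B)]|.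
  rewrite -sum1_card; apply: leq_sum => y yN; apply: leq_trans (r2 y yN) _.
  apply/subset_leq_card/subsetP => B; rewrite !inE.
  by case/and3P=> -> /andP[-> ->] ->.
rewrite card_incidence N4.
have : \sum_(B in D | (#|B| == 4) && (#|B :&: W| == 2)) #|B :&: N| <= q 2.
  rewrite /profile -[#|_|]muln1 -sum_nat_const_cond; apply: leq_sum.
  move=> B /and3P[BD _ /eqP BW]; apply: (card_meet_le1 pair_unique) => //.
  by apply: contra_eqN BW => /eqP ->; rewrite NW.
rewrite q2; lia.
Qed.

End TriangleProfile.

Theorem mainTheorem16 (D : {set {set 'I_18}}) :
  K34_decomposition D -> alpha D = 13 ->
  (t_count D 0, t_count D 1, t_count D 2, t_count D 3) <> (0, 1, 9, 3).
Proof.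
(* alpha D = 13 follows from the profile, as alpha D = t_0 + t_1 + t_2 + t_3. *)
move=> decD _ [t0 t1 t2 t3].
have [[q0 [_ [q2 [_ q4]]]] | [q0 [_ [q2 [q3 q4]]]]] := K4_profile decD t0 t1 t2 t3.
  exact: (profile_A_impossible decD t0 t1 t2 t3 q0 q2 q4).
exact: (profile_B_impossible decD t0 t1 t2 t3 q0 q2 q3 q4).
Qed.
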